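(* Let $O$ be a set of Boolean functions, $\textsc{prop}$ a finite set of propositional variables, and $p$ a propositional variable. Then $\mathrm{PL}_O[\textsc{prop}]\leq_{pc}\mathrm{ML}_{O\cup\{\Diamond\}}[\{p\}]$ and $\mathrm{PL}_O[\textsc{prop}]\leq_{pc}\mathrm{ML}_{O\cup\{\Box\}}[\{p\}]$.
   Context: $\mathrm{PL}_O[\textsc{prop}]$ is the set of propositional formulas $\phi::=x\mid f(\phi_1,\dots,\phi_n)$ with $x\in\textsc{prop}$ and $f\in O$, viewed as a concept class with examples the truth assignments $V:\textsc{prop}\to\{0,1\}$ and $\lambda(\phi)$ the set of satisfying assignments. $\mathrm{ML}_{O\cup\{\Diamond\}}[\{p\}]$ is the set of modal formulas $\phi::=p\mid f(\phi_1,\dots,\phi_n)\mid\Diamond\phi$ with $f\in O$ (Boolean functions interpreted pointwise), and similarly with $\Box$; it is viewed as a concept class whose examples are pointed finite Kripke models $(M,w)$ and $\lambda(\phi)=\{(M,w)\mid M,w\models\phi\}$. For concept classes $\mathcal{C}_i=(C_i,E_i,\lambda_i)$, $\mathcal{C}_1\leq_{pc}\mathcal{C}_2$ means there are $f:C_1\to C_2$ and $h:E_1\to E_2$ such that (i) for all $c\in C_1,e\in E_1$: $e\in\lambda_1(c)$ iff $h(e)\in\lambda_2(f(c))$; and (ii) for each $e\in E_2$, either $e\in\lambda_2(f(c))$ for all $c\in C_1$, or for no $c\in C_1$, or there is $e'\in E_1$ with $\{c\mid e\in\lambda_2(f(c))\}=\{c\mid e'\in\lambda_1(c)\}$. *)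

From mathcomp Require Import all_boot.
Set Implicit Arguments. Unset Strict Implicit. Unset Printing Implicit Defensive.

(** Concept classes (C, E, lambda): lambda c is the set of examples of c. *)
Record concept_class := ConceptClass {
  cc_C : Type;
  cc_E : Type;
  cc_lam : cc_C -> cc_E -> Prop }.

(** Polynomial(-free) concept reduction  C1 <=_pc C2 . Set equality
    {c | e in lam2 (f c)} = {c | e' in lam1 c} is stated pointwise. *)
Definition pc_reducible (K1 K2 : concept_class) : Prop :=
  exists (f : cc_C K1 -> cc_C K2) (h : cc_E K1 -> cc_E K2),
    (forall (c : cc_C K1) (e : cc_E K1), cc_lam c e <-> cc_lam (f c) (h e)) /\
    (forall e : cc_E K2,
        (forall c : cc_C K1, cc_lam (f c) e) \/
        (forall c : cc_C K1, ~ cc_lam (f c) e) \/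
        (exists e' : cc_E K1, forall c : cc_C K1, cc_lam (f c) e <-> cc_lam c e')).

Definition bfun : Type := {n : nat & ('I_n -> bool) -> bool}.
Definition bf_arity (f : bfun) : nat := projT1 f.
Definition bf_eval (f : bfun) : ('I_(bf_arity f) -> bool) -> bool := projT2 f.

Inductive pform (O : bfun -> Prop) (P : Type) : Type :=
| PVar : P -> pform O P
| PFun : forall f : bfun, O f -> ('I_(bf_arity f) -> pform O P) -> pform O P.

Fixpoint peval (O : bfun -> Prop) (P : Type) (V : P -> bool) (phi : pform O P) : bool :=
  match phi with
  | PVar x => V x
  | PFun f _ args => bf_eval (fun i => peval V (args i))
  end.

Definition PL (O : bfun -> Prop) (P : finType) : concept_class :=
  @ConceptClass (pform O P) (P -> bool) (fun phi V => peval V phi = true).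

Inductive modality := Dia | Box.

Inductive mform (O : bfun -> Prop) (m : modality) : Type :=
| MVar_p : mform O m
| MFun : forall f : bfun, O f -> ('I_(bf_arity f) -> mform O m) -> mform O m
| MMod : mform O m -> mform O m.

Record kmodel := KModel {
  kW :> finType;
  kR : rel kW;
  kVp : kW -> bool }.

Definition pointed_model : Type := {M : kmodel & kW M}.

Fixpoint msat (O : bfun -> Prop) (m : modality) (M : kmodel) (w : kW M)
  (phi : mform O m) {struct phi} : bool :=
  match phi with
  | MVar_p => kVp w
  | MFun f _ args => bf_eval (fun i => msat w (args i))
  | MMod psi =>
      match m with
      | Dia => [exists v : kW M, kR w v && msat v psi]
      | Box => [forall v : kW M, kR w v ==> msat v psi]
      end
  end.

Definition ML (O : bfun -> Prop) (m : modality) : concept_class :=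
  @ConceptClass (mform O m) pointed_model
    (fun phi e => msat (projT2 e) phi = true).

From Stdlib Require Import FunctionalExtensionality.
From mathcomp Require Import all_boot.
Set Implicit Arguments. Unset Strict Implicit. Unset Printing Implicit Defensive.

(* Enumerate prop as x_0, ..., x_(n-1) and translate a propositional formula by
   substituting the modal formula M^i p (M = Diamond or Box) for x_i.  A
   valuation V becomes the chain 0 -> 1 -> ... -> n with p true at world i iff
   V x_i holds; at world 0, M^i p holds iff V x_i does, so the translation
   preserves truth.  Conversely, at any pointed model (M, w) every translated
   formula is evaluated as the original one under the valuation
   x_i |-> [M, w |= M^i p], which is the second condition of <=_pc. *)

Section Substitution.

Variables (O : bfun -> Prop) (P : Type) (m : modality) (t : P -> mform O m).

Fixpoint subst_pform (phi : pform O P) : mform O m :=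
  match phi with
  | PVar x => t x
  | PFun _ Of args => MFun Of (fun i => subst_pform (args i))
  end.

Lemma msat_subst_pform (M : kmodel) (w : M) (phi : pform O P) :
  msat w (subst_pform phi) = peval (fun x => msat w (t x)) phi.
Proof.
elim: phi => [x|f Of args IHargs] //=.
by congr bf_eval; apply: functional_extensionality => i; apply: IHargs.
Qed.

End Substitution.

Lemma pc_reducible_subst (O : bfun -> Prop) (P : finType) (m : modality)
    (t : P -> mform O m) (h : (P -> bool) -> pointed_model) :
  (forall (V : P -> bool) (x : P), msat (projT2 (h V)) (t x) = V x) ->
  pc_reducible (PL O P) (ML O m).
Proof.
move=> h_realizes; exists (subst_pform t), h; split.
- move=> phi V /=; rewrite msat_subst_pform.
  suff -> : (fun x => msat (projT2 (h V)) (t x)) = V by [].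
  by apply: functional_extensionality => x; apply: h_realizes.
- move=> [M w]; right; right; exists (fun x => msat w (t x)) => phi /=.
  by rewrite msat_subst_pform.
Qed.

Lemma msat_MMod_unique_succ (O : bfun -> Prop) (m : modality) (M : kmodel)
    (w s : M) (psi : mform O m) :
  (forall v, kR w v = (v == s)) -> msat w (MMod psi) = msat s psi.
Proof.
move=> succ_w; case: m psi => psi /=.
- apply/existsP/idP => [[v]|sat_s]; first by rewrite succ_w => /andP[/eqP-> ->].
  by exists s; rewrite succ_w eqxx.
- apply/forallP/idP => [/(_ s)|sat_s v]; first by rewrite succ_w eqxx.
  by rewrite succ_w; apply/implyP => /eqP->.
Qed.

Definition iter_MMod_p (O : bfun -> Prop) (m : modality) (k : nat) : mform O m :=
  iter k (@MMod O m) (MVar_p O m).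

Definition chain_model (N : nat) (g : nat -> bool) : kmodel :=
  @KModel 'I_N.+1 (fun i j => val j == (val i).+1) (fun i => g (val i)).

Lemma msat_iter_MMod_chain (O : bfun -> Prop) (m : modality) (N : nat)
    (g : nat -> bool) (k : nat) (i : 'I_N.+1) :
  i + k <= N -> msat (M := chain_model N g) i (iter_MMod_p O m k) = g (i + k).
Proof.
elim: k i => [|k IHk] i ik_le_N; first by rewrite addn0.
have i_lt_N : i < N by apply: leq_trans ik_le_N; rewrite addnS ltnS leq_addr.
pose s : 'I_N.+1 := Ordinal (i_lt_N : i.+1 < N.+1).
rewrite [iter_MMod_p _ _ _]/= (@msat_MMod_unique_succ _ _ (chain_model N g) i s).
  by rewrite IHk /= addSnnS.
by move=> v; apply/eqP/eqP => [v_eq|->]; first exact: val_inj.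
Qed.

Lemma pc_reducible_PL_ML (O : bfun -> Prop) (P : finType) (m : modality) :
  pc_reducible (PL O P) (ML O m).
Proof.
pose n := size (enum P).
apply: (@pc_reducible_subst O P m (fun x => iter_MMod_p O m (index x (enum P)))
          (fun V => existT _ (chain_model n (nth false (map V (enum P)))) ord0)).
move=> V x /=.
have x_lt_n : index x (enum P) < n by rewrite index_mem mem_enum.
rewrite msat_iter_MMod_chain /= ?add0n ?(ltnW x_lt_n) //.
by rewrite (nth_map x) // nth_index ?mem_enum.
Qed.

Theorem lemmaB4 (O : bfun -> Prop) (P : finType) :
  pc_reducible (PL O P) (ML O Dia) /\ pc_reducible (PL O P) (ML O Box).
Proof. by split; apply: pc_reducible_PL_ML. Qed.
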